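(* Let $\ell$ be a positive integer. Any partial $(n,k,t)_\lambda$-system has an $\ell$-presequencing $(U_0,\ldots,U_{s-1})$ with $s=\lceil\sigma\rceil$, where \[ \sigma=\sigma(n,k,t,\lambda)=\left(e(2^k-1)\left(k\lambda\binom{n-1}{t-1}\binom{k-1}{t-1}^{-1}-k+1\right)\right)^{\frac{1}{k-1}} \] and $e$ is the base of the natural logarithm.
   Context: For positive integers $n,k,t,\lambda$ with $n \geq k > t \geq 2$, a partial $(n,k,t)_\lambda$-system is a pair $(X,\mathcal{B})$ where $X$ is an $n$-set of vertices and $\mathcal{B}$ is a collection of $k$-subsets of $X$ (blocks) such that each $t$-subset of $X$ is contained in at most $\lambda$ blocks. An independent set is a subset of $X$ containing no block. An $\ell$-buffered set is a triple $(S,S^{L},S^{R})$ with $S^{L},S^{R}\subseteq S$ (buffers) such that: (B1) if $|S|\le \ell-2$ then $S^{L}=S^{R}=S$; (B2) if $\ell-1\le |S|\le 2\ell-2$ then $|S^{L}|=|S^{R}|=\ell-1$ and $S^{L}\cup S^{R}=S$; (B3) if $|S|\ge 2\ell-1$ then $|S^{L}|=|S^{R}|=\ell-1$ and $S^{L}\cap S^{R}=\emptyset$. An $\ell$-presequencing of $(X,\mathcal{B})$ is a tuple $(X_0,\ldots,X_{s-1})$ of $\ell$-buffered sets (classes) whose underlying sets partition $X$, such that (P1) each $X_i$ is independent, and (P2) for each $i\in\mathbb{Z}_s$, $X_i^{R}\cup X_{i+1}^{L}$ is independent (indices mod $s$). *)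

From HB Require Import structures.
From mathcomp Require Import all_boot all_order all_algebra.
From mathcomp Require Import all_classical all_reals all_analysis.
Set Implicit Arguments. Unset Strict Implicit. Unset Printing Implicit Defensive.
Import Order.TTheory GRing.Theory Num.Theory.

Section Defs.
Variable T : finType.

(* A block system on vertex set T is a list (multiset) of blocks. *)
Definition blocks_k_uniform (k : nat) (B : seq {set T}) : Prop :=
  forall b, b \in B -> #|b| = k.

Definition partial_system (n k t lam : nat) (B : seq {set T}) : Prop :=
  #|T| = n /\ blocks_k_uniform k B /\
  forall S : {set T}, #|S| = t -> (count (fun b : {set T} => S \subset b) B <= lam)%N.

Definition independent (B : seq {set T}) (S : {set T}) : bool :=
  all (fun b : {set T} => ~~ (b \subset S)) B.

(* l-buffered set (S, SL, SR); the inequalities are written without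
   truncated subtraction: |S| <= l-2  <->  |S|+2 <= l, etc. *)
Definition buffered (l : nat) (S SL SR : {set T}) : Prop :=
  SL \subset S /\ SR \subset S /\
  ((#|S| + 2 <= l)%N -> SL = S /\ SR = S) /\
  ((l <= #|S| + 1)%N -> (#|S| + 2 <= 2 * l)%N ->
      #|SL| = l.-1 /\ #|SR| = l.-1 /\ SL :|: SR = S) /\
  ((2 * l <= #|S| + 1)%N ->
      #|SL| = l.-1 /\ #|SR| = l.-1 /\ [disjoint SL & SR]).

(* l-presequencing (X_0, ..., X_{s-1}); class i is (S i, SL i, SR i);
   indices are taken mod s via ordS. *)
Definition presequencing (l s : nat) (B : seq {set T})
    (S SL SR : 'I_s -> {set T}) : Prop :=
  (forall i, buffered l (S i) (SL i) (SR i)) /\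
  (\bigcup_(i < s) S i = [set: T]) /\
  (forall i j : 'I_s, i != j -> [disjoint S i & S j]) /\
  (forall i, independent B (S i)) /\
  (forall i, independent B (SR i :|: SL (ordS i))).
End Defs.

Local Open Scope ring_scope.

Definition sigma (R : realType) (n k t lam : nat) : R :=
  powR (expR 1 * (2 ^+ k - 1) *
        ((k * lam * 'C(n.-1, t.-1))%:R / ('C(k.-1, t.-1))%:R - k%:R + 1))
       ((k.-1)%:R)^-1.

(* Colour the points uniformly at random with the colours Z_s and call a block bad when
   all its points get two cyclically consecutive colours c, c + 1.  A block is bad with
   probability at most s (2^k - 1) / s^k, independently of the blocks disjoint from it.
   Double counting t-subsets shows that a point lies in at most
   lam C(n-1, t-1) / C(k-1, t-1) blocks, so a block meets at most
   d <= k (lam C(n-1, t-1) / C(k-1, t-1) - 1) other blocks.  The choice of sigma gives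
   s^(k-1) >= e (2^k - 1) (d + 1), the condition of the symmetric local lemma, so some
   colouring has no bad block.  Its colour classes, buffered by their first and last
   l - 1 elements, form the presequencing: every class, and every X_i^R :|: X_(i+1)^L,
   lies within two consecutive colours and therefore contains no block. *)

From HB Require Import structures.
From mathcomp Require Import all_boot all_order all_algebra.
From mathcomp Require Import reals sequences exp.
From mathcomp Require Import zify ring lra.
Set Implicit Arguments. Unset Strict Implicit. Unset Printing Implicit Defensive.
Import Order.TTheory GRing.Theory Num.Theory.

Lemma card_bigcup_leq (I T : finType) (P : pred I) (F : I -> {set T}) :
  #|\bigcup_(i | P i) F i| <= \sum_(i | P i) #|F i|.
Proof.
elim/big_ind2 : _ => // [|m A n B Am Bn]; first by rewrite cards0.
by rewrite (leq_trans (leq_card_setU _ _)) // leq_add.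
Qed.

(* The symmetric local lemma with probabilities on the uniform space [Om] replaced by
   counting: [A_small] says P(A i) <= x (1 - x)^d for x = 1/c, and [cond_small n0] is the
   inductive claim P(A i | avoiding S) <= 1/c for |S| < n0. *)
Section LocalLemma.
Variables (Om I : finType) (A : I -> {set Om}) (dep : I -> {set I}) (d c : nat).

Implicit Types (U V W S : {set I}).

Definition avoiding S : {set Om} := [set w | [forall j in S, w \notin A j]].

Lemma avoidingS U V : U \subset V -> avoiding V \subset avoiding U.
Proof.
move=> sUV; apply/subsetP => w; rewrite !inE => /forall_inP avV.
by apply/forall_inP => j /(subsetP sUV); apply: avV.
Qed.

Lemma avoidingU1 j W : avoiding (j |: W) = avoiding W :\: A j.
Proof.
apply/setP => w; rewrite !inE; apply/forall_inP/andP => [av | [wAj avW] x].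
  split; first by apply: av; rewrite setU11.
  by apply/forall_inP => x xW; apply: av; rewrite setU1r.
by case/setU1P => [-> | /(forall_inP avW)].
Qed.

Definition cond_small n0 := forall i S, #|S| < n0 -> i \notin S ->
  #|A i :&: avoiding S| * c <= #|avoiding S|.

Lemma avoidingU1_ratio n0 j W : cond_small n0 -> #|W| < n0 -> j \notin W ->
  c.-1 * #|avoiding W| <= c * #|avoiding (j |: W)|.
Proof.
move=> small ltWn jW; have := small j W ltWn jW.
rewrite avoidingU1 -(cardsID (A j) (avoiding W)) setIC.
set a := #|_ :&: _|; set g := #|_ :\: _|; nia.
Qed.

Lemma avoiding_ratio n0 U V : cond_small n0 -> U \subset V -> #|V| <= n0 ->
  c.-1 ^ #|V :\: U| * #|avoiding U| <= c ^ #|V :\: U| * #|avoiding V|.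
Proof.
move=> small; move eqk: #|V :\: U| => k.
elim: k V eqk => [|k IH] V eqk sUV leVn.
  have -> : V = U by apply/eqP; rewrite eqEsubset sUV andbT -setD_eq0 -cards_eq0 eqk.
  by rewrite !mul1n.
have [j jVU] : exists j, j \in V :\: U by apply/set0Pn; rewrite -card_gt0 eqk.
have [jU jV] : j \notin U /\ j \in V by move: jVU; rewrite inE => /andP.
set W := V :\ j.
have eqV : V = j |: W by rewrite setD1K.
have ltWV : #|W| < #|V| by rewrite (cardsD1 j V) jV.
have sUW : U \subset W by rewrite subsetD1 sUV.
have eqkW : #|W :\: U| = k.
  have -> : W :\: U = (V :\: U) :\ j by rewrite !setDDl setUC.
  by move: eqk; rewrite (cardsD1 j) jVU => -[].
rewrite !expnS -!mulnA.
apply: leq_trans (leq_mul (leqnn _) (IH W eqkW sUW (ltnW (leq_trans ltWV leVn)))) _.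
rewrite mulnCA [c * _]mulnCA leq_mul2l eqV (avoidingU1_ratio small) ?orbT //.
  exact: leq_trans ltWV leVn.
by rewrite !inE eqxx.
Qed.

Lemma lll_step_bound q r N a X g0 g : 0 < N -> 0 < c ->
  X * N = a * g0 -> a * c ^ (q + r).+1 <= c.-1 ^ (q + r) * N ->
  c.-1 ^ q * g0 <= c ^ q * g -> X * c <= g.
Proof.
have le_r : c.-1 ^ r <= c ^ r by case: r => // r; rewrite leq_exp2r // leq_pred.
move=> N_gt0 c_gt0 eqX small ratio.
have Cq_gt0 : 0 < c ^ q by rewrite expn_gt0 c_gt0.
have Cr_gt0 : 0 < c ^ r by rewrite expn_gt0 c_gt0.
rewrite -(@leq_pmul2r (N * c ^ q * c ^ r)) ?muln_gt0 ?N_gt0 ?Cq_gt0 //.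
move: small; rewrite expnS !expnD => small.
have -> : X * c * (N * c ^ q * c ^ r) = X * N * (c * (c ^ q * c ^ r)) by ring.
rewrite eqX mulnAC.
apply: leq_trans (leq_mul small (leqnn g0)) _.
have -> : c.-1 ^ q * c.-1 ^ r * N * g0 = c.-1 ^ r * N * (c.-1 ^ q * g0) by ring.
apply: leq_trans (leq_mul (leqnn _) ratio) _.
have -> : g * (N * c ^ q * c ^ r) = c ^ r * N * (c ^ q * g) by ring.
by rewrite leq_mul2r leq_mul2r le_r !orbT.
Qed.

Hypotheses (c_gt1 : 1 < c) (Om_gt0 : 0 < #|Om|) (card_dep : forall i, #|dep i| <= d).
Hypothesis A_indep : forall i S, i \notin S -> [disjoint S & dep i] ->
  #|A i :&: avoiding S| * #|Om| = #|A i| * #|avoiding S|.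
Hypothesis A_small : forall i, #|A i| * c ^ d.+1 <= c.-1 ^ d * #|Om|.

Lemma cond_small_all n0 : cond_small n0.
Proof.
elim: n0 => [|n0 IH] // i S ltSn iS.
set S' := S :\: dep i.
have iS' : i \notin S' by rewrite inE negb_and iS orbT.
have disS' : [disjoint S' & dep i].
  by rewrite -setI_eq0 setIDAC setDIl setDv setI0.
have le_q : #|S :\: S'| <= d.
  apply: leq_trans (card_dep i); apply: subset_leq_card.
  by rewrite setDDr setDv set0U subsetIr.
apply: leq_trans (_ : #|A i :&: avoiding S'| * c <= _).
  by rewrite leq_mul2r subset_leq_card ?orbT // setIS // avoidingS // subsetDl.
have [r eqd] : exists r, d = #|S :\: S'| + r by exists (d - #|S :\: S'|); rewrite subnKC.
apply: (lll_step_bound (q := #|S :\: S'|) (r := r) Om_gt0 (ltnW c_gt1) (A_indep iS' disS')).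
  by rewrite -eqd; apply: A_small.
exact: avoiding_ratio IH (subsetDl _ _) ltSn.
Qed.

Theorem lovasz_local_lemma : exists w, forall i, w \notin A i.
Proof.
have := avoiding_ratio (@cond_small_all #|I|.+1) (sub0set [set: I]).
rewrite cardsT setD0 cardsT => /(_ (leqnSn _)).
have -> : avoiding set0 = [set: Om].
  by apply/setP => w; rewrite !inE; apply/forall_inP => j; rewrite inE.
rewrite cardsT => ratio.
have /card_gt0P [w] : 0 < #|avoiding [set: I]|.
  have : 0 < c.-1 ^ #|I| * #|Om| by rewrite muln_gt0 Om_gt0 expn_gt0 -ltnS prednK ?c_gt1 // ltnW.
  by move/leq_trans/(_ ratio); rewrite muln_gt0 => /andP [].
by rewrite inE => /forall_inP avw; exists w => i; apply: avw; rewrite inE.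
Qed.

End LocalLemma.

Section FfunIndependence.
Variables (T C : finType).
Implicit Types (b : {set T}) (A E : {set {ffun T -> C}}).

Definition determined_by b A :=
  forall f g : {ffun T -> C}, {in b, f =1 g} -> (f \in A) = (g \in A).

Lemma card_setI_determined b A E : determined_by b A -> determined_by (~: b) E ->
  #|A :&: E| * #|{ffun T -> C}| = #|A| * #|E|.
Proof.
move=> detA detE.
(* Exchanging the values on [b] maps [A x E] bijectively onto [(A :&: E) x setT]. *)
pose mix (f g : {ffun T -> C}) := [ffun v => if v \in b then f v else g v].
pose swap (p : {ffun T -> C} * {ffun T -> C}) := (mix p.1 p.2, mix p.2 p.1).
have swapK : involutive swap.
  by move=> [f g]; congr pair; apply/ffunP => v; rewrite !ffunE; case: (v \in b).
have mixA f g : (mix f g \in A) = (f \in A) by apply: detA => v vb; rewrite ffunE vb.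
have mixE f g : (mix f g \in E) = (g \in E).
  by apply: detE => v; rewrite inE ffunE => /negbTE ->.
rewrite -cardsT -!cardsX -(card_imset (setX A E) (inv_inj swapK)).
rewrite (can_imset_pre _ swapK); apply: eq_card => -[f g].
by rewrite !inE /= mixA mixE andbT.
Qed.

Lemma card_ffun_in b (P : {set C}) :
  #|[set f : {ffun T -> C} | [forall v in b, f v \in P]]| = #|P| ^ #|b| * #|C| ^ #|~: b|.
Proof.
pose F v := if v \in b then P else [set: C].
rewrite (eq_card (B := family F)) => [|f]; last first.
  rewrite inE; apply/forall_inP/familyP => [Pf v | Ff v vb]; last by have := Ff v; rewrite /F vb.
  by rewrite /F; case: ifP => [/Pf | _]; rewrite ?inE.
rewrite card_family foldrE big_map big_enum /= (bigID (mem b)) /=.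
rewrite (eq_bigr (fun _ => #|P|)) => [|v vb]; last by rewrite /F vb.
rewrite [X in _ * X](eq_bigr (fun _ => #|C|)) => [|v vb]; last by rewrite /F (negbTE vb) cardsT.
by rewrite !prod_nat_const; congr (_ ^ _ * _ ^ _); apply: eq_card => v; rewrite !inE.
Qed.

End FfunIndependence.

Lemma ordS_neq s (c : 'I_s) : 1 < s -> ordS c != c.
Proof.
move=> s_gt1; apply/eqP => /(congr1 val) /=; move: s_gt1 (ltn_ord c); move: (val c) => x.
by case: (ltngtP x.+1 s) => [/modn_small -> | // | <-]; rewrite ?modnn; lia.
Qed.

Section ConsecutiveColors.
Variables (T : finType) (s : nat).
Implicit Type b : {set T}.

Definition consecutive_colored b : {set {ffun T -> 'I_s}} :=
  [set f : {ffun T -> 'I_s} | [exists c, b \subset f @^-1: [set c; ordS c]]].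

Lemma consecutive_colored_determined b : determined_by b (consecutive_colored b).
Proof.
move=> f g eq_fg; rewrite !inE; apply: eq_existsb => c.
by apply/subsetP/subsetP => sub v vb; have := sub v vb; rewrite !inE (eq_fg v vb).
Qed.

Lemma card_consecutive_colored b : 1 < s -> 0 < #|b| ->
  #|consecutive_colored b| <= s * ((2 ^ #|b| - 1) * s ^ #|~: b|).
Proof.
move=> s_gt1 b_gt0.
pose pair_valued c := [set f : {ffun T -> 'I_s} | [forall v in b, f v \in [set c; ordS c]]].
pose succ_valued c := [set f : {ffun T -> 'I_s} | [forall v in b, f v \in [set ordS c]]].
have hit f c : f \in pair_valued c -> (exists2 v, v \in b & f v = c) ->
    f \in \bigcup_c (pair_valued c :\: succ_valued c).
  move=> fc [v vb fv]; apply/bigcupP; exists c => //; rewrite inE fc andbT.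
  apply/negP; rewrite inE => /forall_inP/(_ v vb); rewrite inE fv eq_sym.
  by rewrite (negbTE (ordS_neq c s_gt1)).
have sub : consecutive_colored b \subset \bigcup_c (pair_valued c :\: succ_valued c).
  apply/subsetP => f; rewrite inE => /existsP [c /subsetP fc].
  have pair_c : f \in pair_valued c by rewrite inE; apply/forall_inP => v /fc; rewrite inE.
  have [/exists_inP [v vb /eqP fv] | no_c] := boolP [exists v in b, f v == c].
    by apply: hit pair_c _; exists v.
  have fS v : v \in b -> f v = ordS c.
    move=> vb; move: (fc v vb); rewrite !inE => /orP [/eqP fv | /eqP //].
    by move: no_c; rewrite negb_exists => /forallP/(_ v); rewrite vb fv eqxx.
  have [v0 v0b] : exists v, v \in b by apply/set0Pn; rewrite -card_gt0.
  apply: (hit f (ordS c)); last by exists v0; rewrite ?fS.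
  by rewrite inE; apply/forall_inP => v vb; rewrite fS // !inE eqxx.
apply: leq_trans (subset_leq_card sub) _; apply: leq_trans (card_bigcup_leq _ _) _.
rewrite (eq_bigr (fun _ => (2 ^ #|b| - 1) * s ^ #|~: b|)) => [|c _].
  by rewrite sum_nat_const card_ord.
have sub_succ : succ_valued c \subset pair_valued c.
  apply/subsetP => f; rewrite !inE => /forall_inP fc; apply/forall_inP => v /fc.
  by rewrite !inE => ->; rewrite orbT.
rewrite cardsD (setIidPr sub_succ) !card_ffun_in cards2 eq_sym ordS_neq // cards1.
by rewrite exp1n mul1n card_ord mulnBl mul1n.
Qed.

End ConsecutiveColors.

Section BlockDegree.
Variable T : finType.

Lemma card_subsets_through (X : {set T}) v t : v \in X -> 0 < t ->
  #|[set S : {set T} | (S \subset X) && (v \in S) && (#|S| == t)]| = 'C(#|X|.-1, t.-1).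
Proof.
move=> vX t_gt0.
have notin_sub (S : {set T}) : S \subset X :\ v -> v \notin S.
  by move=> sSX; apply/negP => /(subsetP sSX); rewrite !inE eqxx.
have inj : {in [set S : {set T} | (S \subset X :\ v) && (#|S| == t.-1)] &,
    injective (setU [set v])}.
  move=> S1 S2; rewrite !inE => /andP [/notin_sub vS1 _] /andP [/notin_sub vS2 _] eqS.
  by rewrite -(setU1K vS1) -(setU1K vS2) eqS.
rewrite (cardsD1 v X) vX -cards_draws -(card_in_imset inj).
apply: eq_card => S; rewrite inE; apply/idP/imsetP => [/andP [/andP [sSX vS] /eqP <-] | [S']].
  exists (S :\ v); last by rewrite setD1K.
  by rewrite inE setSD //= (cardsD1 v S) vS.
rewrite inE => /andP [sS'X /eqP cardS'] ->.
rewrite setU11 andbT subUset sub1set vX (subset_trans sS'X (subsetDl _ _)) /=.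
by rewrite cardsU1 notin_sub // cardS' add1n prednK.
Qed.

Variable B : seq {set T}.

Definition block (i : 'I_(size B)) := nth set0 B i.

Definition overlapping (i : 'I_(size B)) :=
  [set j | (j != i) && ~~ [disjoint block j & block i]].

Lemma card_blocks (P : pred {set T}) : #|[set j | P (block j)]| = count P B.
Proof. by rewrite -sum1_count (big_nth set0) big_mkord sum1dep_card. Qed.

Variables (n k t lam : nat).
Hypotheses (unifB : blocks_k_uniform k B) (cardT : #|T| = n) (t_gt0 : 0 < t).
Hypothesis countB :
  forall S : {set T}, #|S| = t -> count (fun b : {set T} => S \subset b) B <= lam.

Lemma card_block i : #|block i| = k.
Proof. exact/unifB/mem_nth. Qed.

Lemma degree_bound v :
  #|[set j | v \in block j]| * 'C(k.-1, t.-1) <= lam * 'C(n.-1, t.-1).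
Proof.
pose through (S : {set T}) := (v \in S) && (#|S| == t).
pose inc (j : 'I_(size B)) (S : {set T}) : nat := (S \subset block j) && through S.
have card_through : #|[set S | through S]| = 'C(n.-1, t.-1).
  rewrite -cardT -cardsT -(card_subsets_through (in_setT v) t_gt0).
  by apply: eq_card => S; rewrite !inE subsetT.
have sum_block j : v \in block j -> \sum_S inc j S = 'C(k.-1, t.-1).
  move=> vj; rewrite -(card_block j) -(card_subsets_through vj t_gt0) -sum1dep_card.
  by rewrite [RHS]big_mkcond; apply: eq_bigr => S _; rewrite /inc /through andbA.
have sum_through S : through S -> \sum_j inc j S <= lam.
  move=> thrS; apply: leq_trans (countB (S := S) _); last by case/andP: thrS => _ /eqP.
  rewrite -card_blocks -sum1dep_card [leqRHS]big_mkcond; apply: leq_sum => j _.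
  by rewrite /inc thrS andbT.
rewrite -sum_nat_const; apply: (@leq_trans (\sum_j \sum_S inc j S)).
  rewrite big_mkcond; apply: leq_sum => j _; rewrite inE.
  by case: ifP => [/sum_block -> | _].
rewrite exchange_big (bigID through) /= [X in _ + X]big1 ?addn0 => [|S /negbTE nthr]; last first.
  by apply: big1 => j _; rewrite /inc nthr andbF.
rewrite -card_through -sum1dep_card big_distrr /=.
by apply: leq_sum => S thrS; rewrite muln1 sum_through.
Qed.

Lemma card_overlapping i :
  #|overlapping i| * 'C(k.-1, t.-1) <= k * (lam * 'C(n.-1, t.-1) - 'C(k.-1, t.-1)).
Proof.
set C := 'C(k.-1, t.-1).
have sub : overlapping i \subset \bigcup_(v in block i) ([set j | v \in block j] :\ i).
  apply/subsetP => j; rewrite inE => /andP [ji]; rewrite -setI_eq0 => /set0Pn [v].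
  by rewrite inE => /andP [vj vi]; apply/bigcupP; exists v; rewrite // !inE ji.
apply: leq_trans (leq_mul (subset_leq_card sub) (leqnn _)) _.
apply: leq_trans (leq_mul (card_bigcup_leq _ _) (leqnn _)) _.
rewrite big_distrl /= -(card_block i) -sum_nat_const; apply: leq_sum => v vi.
have := degree_bound v; rewrite -/C (cardsD1 i) inE vi add1n mulSn.
by move=> le; rewrite leq_subRL ?le ?(leq_trans (leq_addr _ _) le).
Qed.

End BlockDegree.

Arguments block {T} B i.
Arguments overlapping {T} B i.

(* The local lemma hypothesis for c = d + 2, given that a block is consecutive_colored
   with probability at most s (2^k - 1) / s^k. *)
Definition coloring_condition k s d := (2 ^ k - 1) * d.+2 ^ d.+1 <= d.+1 ^ d * s ^ k.-1.

Lemma coloring_condition_gt1 k s d : 1 < k -> coloring_condition k s d -> 1 < s.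
Proof.
rewrite /coloring_condition => k_gt1 le_s; rewrite ltnNge; apply/negP => le_s1.
have le_pow : s ^ k.-1 <= 1 by rewrite -(exp1n k.-1) leq_exp2r //; lia.
have lt_pow : d.+1 ^ d < d.+2 ^ d.+1.
  by apply: leq_ltn_trans (leq_pexp2l _ (leqnSn d)) _; rewrite ?ltn_exp2r.
have ge_2k : 2 <= 2 ^ k by rewrite -{1}(expn1 2) leq_exp2l //; lia.
move: le_s le_pow lt_pow ge_2k.
set a := 2 ^ k; set P := d.+1 ^ d; set Q := d.+2 ^ d.+1; set S := s ^ k.-1; nia.
Qed.

Lemma exists_coloring_avoiding (T : finType) (B : seq {set T}) k s d : 1 < s -> 0 < k ->
  blocks_k_uniform k B -> (forall i, #|overlapping B i| <= d) ->
  coloring_condition k s d ->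
  exists f : {ffun T -> 'I_s}, forall b, b \in B -> f \notin consecutive_colored s b.
Proof.
rewrite /coloring_condition => s_gt1 k_gt0 unifB le_dep le_s.
have card_b i : #|block B i| = k by apply: card_block.
have [f avf] : exists f, forall i, f \notin consecutive_colored s (block B i).
  apply: (lovasz_local_lemma (dep := overlapping B) (d := d) (c := d.+2)) => // [|i S iS disS | i].
  - by rewrite card_ffun card_ord expn_gt0 ltnW.
  - apply: card_setI_determined; first exact: consecutive_colored_determined.
    move=> g h eq_gh; rewrite !inE; apply: eq_forallb_in => j jS; congr negb.
    apply: consecutive_colored_determined => v vj; apply: eq_gh; rewrite inE.
    have ji : j != i by apply: contraNneq iS => <-.
    have : j \notin overlapping B i by rewrite (disjointFr disS jS).
    by rewrite inE ji negbK => /disjointFr/(_ vj) ->.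
  - have -> : #|{ffun T -> 'I_s}| = s * s ^ #|~: block B i| * s ^ k.-1.
      rewrite card_ffun card_ord -(cardsC (block B i)) card_b mulnAC -expnS prednK //.
      by rewrite -expnD.
    have := card_consecutive_colored (b := block B i) s_gt1; rewrite card_b => /(_ k_gt0) le_A.
    apply: leq_trans (leq_mul le_A (leqnn _)) _.
    set S := s ^ #|~: block B i|.
    rewrite [leqLHS](_ : _ = s * S * ((2 ^ k - 1) * d.+2 ^ d.+1)); last by ring.
    by rewrite [leqRHS](_ : _ = s * S * (d.+1 ^ d * s ^ k.-1)) ?leq_mul2l ?le_s ?orbT //; ring.
exists f => b bB; have ib : index b B < size B by rewrite index_mem.
by rewrite -(nth_index set0 bB); apply: (avf (Ordinal ib)).
Qed.

Section Buffers.
Variables (T : finType) (l : nat).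

Definition left_buffer (X : {set T}) := [set x in take l.-1 (enum X)].
Definition right_buffer (X : {set T}) := [set x in drop (#|X| - l.-1) (enum X)].

Lemma buffered_left_right X : 0 < l -> buffered l X (left_buffer X) (right_buffer X).
Proof.
move=> l_gt0; rewrite /buffered /left_buffer /right_buffer.
set e := enum X.
have e_uniq : uniq e := enum_uniq _.
have size_e : size e = #|X| by rewrite cardE.
have mem_e x : (x \in e) = (x \in X) by rewrite mem_enum.
have card_take : l.-1 <= #|X| -> #|[set x in take l.-1 e]| = l.-1.
  by move=> le; rewrite cardsE (card_uniqP _) ?take_uniq // size_takel ?size_e.
have card_drop : l.-1 <= #|X| -> #|[set x in drop (#|X| - l.-1) e]| = l.-1.
  by move=> le; rewrite cardsE (card_uniqP _) ?drop_uniq // size_drop size_e; lia.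
split; first by apply/subsetP => x; rewrite inE => /mem_take; rewrite mem_e.
split; first by apply/subsetP => x; rewrite inE => /mem_drop; rewrite mem_e.
split.
  move=> small; rewrite take_oversize ?size_e; last by lia.
  have -> : #|X| - l.-1 = 0 by lia.
  by rewrite drop0; split; apply/setP => x; rewrite inE mem_e.
split.
  move=> le1 le2; rewrite card_take ?card_drop; try lia; split=> //; split=> //.
  apply/setP => x; rewrite !inE; apply/idP/idP.
    by case/orP => [/mem_take | /mem_drop]; rewrite mem_e.
  rewrite -mem_e -{1}(cat_take_drop (#|X| - l.-1) e) mem_cat.
  case/orP => [x_take | ->]; last exact: orbT.
  move: x_take; rewrite -(take_takel _ (_ : #|X| - l.-1 <= l.-1)); last by lia.
  by move/mem_take => ->.
move=> large; rewrite card_take ?card_drop; try lia; split=> //; split=> //.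
rewrite -setI_eq0; apply/eqP/setP => x; rewrite !inE; apply/negP => /andP [x_take x_drop].
have x_drop' : x \in drop l.-1 e.
  move: x_drop; have -> : #|X| - l.-1 = (#|X| - l.-1 - l.-1) + l.-1 by lia.
  by rewrite -drop_drop => /mem_drop.
move: e_uniq; rewrite -(cat_take_drop l.-1 e) cat_uniq => /and3P [_ /hasP no_common _].
by apply: no_common; exists x.
Qed.

End Buffers.

Lemma presequencing_of_coloring (T : finType) (B : seq {set T}) l s (f : {ffun T -> 'I_s}) :
  0 < l -> (forall b, b \in B -> f \notin consecutive_colored s b) ->
  exists S SL SR : 'I_s -> {set T}, presequencing l B S SL SR.
Proof.
move=> l_gt0 good.
pose S c := f @^-1: [set c].
pose S2 c := f @^-1: [set c; ordS c].
have indep c (X : {set T}) : X \subset S2 c -> independent B X.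
  move=> sX; apply/allP => b bB; apply: contra (good b bB) => sbX.
  by rewrite inE; apply/existsP; exists c; apply: subset_trans sbX sX.
have S_S2 c : S c \subset S2 c by apply: preimsetS; rewrite sub1set !inE eqxx.
have SS_S2 c : S (ordS c) \subset S2 c by apply: preimsetS; rewrite sub1set !inE eqxx orbT.
have buf c := buffered_left_right (S c) l_gt0.
exists S, (fun c => left_buffer l (S c)), (fun c => right_buffer l (S c)).
split; first exact: buf.
split; first by apply/setP => v; rewrite inE; apply/bigcupP; exists (f v); rewrite ?inE.
split.
  move=> i j ij; rewrite -setI_eq0; apply/eqP/setP => v; rewrite !inE.
  by apply/negP => /andP [/eqP -> /eqP eq_ij]; rewrite eq_ij eqxx in ij.
split; first by move=> c; apply: (indep c).
move=> c; apply: (indep c); have [_ [sR _]] := buf c; have [sL _] := buf (ordS c).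
by rewrite subUset (subset_trans sR (S_S2 c)) (subset_trans sL (SS_S2 c)).
Qed.

Section SigmaBound.
Local Open Scope ring_scope.
Variable R : realType.

Lemma exprSn_le_expR1 (d : nat) : d.+2%:R ^+ d.+1 <= expR 1 * d.+1%:R ^+ d.+1 :> R.
Proof.
have le_exp : d.+2%:R <= d.+1%:R * expR d.+1%:R^-1 :> R.
  have -> : d.+2%:R = d.+1%:R * (1 + d.+1%:R^-1) :> R.
    by rewrite mulrDr mulr1 mulfV ?pnatr_eq0 // -natr1.
  by rewrite ler_pM2l ?ltr0n // expR_ge1Dx.
have -> : expR 1 = expR d.+1%:R^-1 ^+ d.+1 :> R by rewrite -expRM_natr mulVf ?pnatr_eq0.
rewrite -exprMn mulrC; apply: lerXn2r; rewrite ?nnegrE ?ler0n ?mulr_ge0 ?expR_ge0 //.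
Qed.

Definition overlap_bound (n k t lam : nat) : R :=
  (k * lam * 'C(n.-1, t.-1))%:R / 'C(k.-1, t.-1)%:R - k%:R + 1.

Lemma overlap_bound_ge (n k t lam d : nat) :
  (0 < t)%N -> (t < k)%N -> (0 < lam)%N -> (k <= n)%N ->
  (d * 'C(k.-1, t.-1) <= k * (lam * 'C(n.-1, t.-1) - 'C(k.-1, t.-1)))%N ->
  d.+1%:R <= overlap_bound n k t lam.
Proof.
set C := 'C(k.-1, t.-1); set C' := 'C(n.-1, t.-1) => t_gt0 lt_tk lam_gt0 le_kn le_d.
have C_gt0 : (0 < C)%N by rewrite bin_gt0; lia.
have le_CC' : (C <= lam * C')%N.
  by apply: leq_trans (leq_bin2l _ (_ : k.-1 <= n.-1)%N) _; [lia | apply: leq_pmull].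
have le_nat : ((d + k) * C <= k * lam * C')%N.
  by move: le_d; rewrite mulnBr mulnDl -mulnA; nia.
have : (d + k)%:R <= (k * lam * C')%:R / C%:R :> R.
  by rewrite ler_pdivlMr ?ltr0n // -natrM ler_nat.
rewrite /overlap_bound -/C -/C' natrD -addn1 natrD; lra.
Qed.

Lemma sigma_pow_ge (n k t lam d : nat) : (1 < k)%N ->
  d.+1%:R <= overlap_bound n k t lam ->
  expR 1 * (2 ^ k - 1)%N%:R * d.+1%:R <= sigma R n k t lam ^+ k.-1.
Proof.
move=> k_gt1 le_d; set K := overlap_bound n k t lam.
have e2k : (2 ^ k - 1)%N%:R = 2 ^+ k - 1 :> R by rewrite natrB ?expn_gt0 // natrX.
have rad_ge0 : 0 <= expR 1 * (2 ^+ k - 1) * K.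
  by rewrite -e2k !mulr_ge0 ?expR_ge0 // (le_trans _ le_d).
have -> : sigma R n k t lam = (expR 1 * (2 ^+ k - 1) * K) `^ (k.-1)%:R^-1 by [].
rewrite -powR_mulrn ?powR_ge0 // -powRrM mulVf ?powRr1 ?pnatr_eq0; try lia.
by rewrite e2k ler_wpM2l // -e2k mulr_ge0 ?expR_ge0.
Qed.

Lemma coloring_condition_ceil_sigma (n k t lam s d : nat) :
  (1 < k)%N -> d.+1%:R <= overlap_bound n k t lam ->
  s%:Z = Num.ceil (sigma R n k t lam) ->
  coloring_condition k s d.
Proof.
move=> k_gt1 le_d s_ceil.
have sigma_ge0 : 0 <= sigma R n k t lam by rewrite powR_ge0.
have le_sigma : sigma R n k t lam <= s%:R by rewrite (le_trans (ceil_ge _)) // -s_ceil.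
rewrite /coloring_condition -(ler_nat R) !natrM !natrX.
apply: le_trans (_ : (2 ^ k - 1)%N%:R * (expR 1 * d.+1%:R ^+ d.+1) <= _).
  by rewrite ler_wpM2l ?exprSn_le_expR1.
apply: le_trans (_ : d.+1%:R ^+ d * sigma R n k t lam ^+ k.-1 <= _); last first.
  by apply: ler_wpM2l; [exact: exprn_ge0 | apply: lerXn2r; rewrite ?nnegrE ?ler0n].
rewrite exprS.
have -> : (2 ^ k - 1)%N%:R * (expR 1 * (d.+1%:R * d.+1%:R ^+ d)) =
    d.+1%:R ^+ d * (expR 1 * (2 ^ k - 1)%N%:R * d.+1%:R) :> R by ring.
by apply: ler_wpM2l; rewrite ?exprn_ge0 ?sigma_pow_ge.
Qed.

End SigmaBound.

Theorem lemma8 (R : realType) (n k t lam l : nat) (T : finType)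
    (B : seq {set T}) (s : nat) :
  (0 < l)%N -> (0 < lam)%N -> (2 <= t)%N -> (t < k)%N -> (k <= n)%N ->
  partial_system n k t lam B ->
  (s%:Z = Num.ceil (sigma R n k t lam))%R ->
  exists S SL SR : 'I_s -> {set T}, presequencing l B S SL SR.
Proof.
move=> l_gt0 lam_gt0 t_ge2 lt_tk le_kn [cardT [unifB countB]] s_ceil.
have k_gt1 : 1 < k by lia.
pose d := \max_(i < size B) #|overlapping B i|.
have le_dep i : #|overlapping B i| <= d := leq_bigmax i.
have le_d : d * 'C(k.-1, t.-1) <= k * (lam * 'C(n.-1, t.-1) - 'C(k.-1, t.-1)).
  rewrite /d; elim/big_ind: _ => // [x y ? ?|i _]; first by rewrite maxnMl geq_max; apply/andP.
  by apply: card_overlapping; rewrite // ltnW.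
have le_s : coloring_condition k s d.
  apply: coloring_condition_ceil_sigma k_gt1 _ s_ceil.
  exact: overlap_bound_ge (ltnW t_ge2) lt_tk lam_gt0 le_kn le_d.
have s_gt1 := coloring_condition_gt1 k_gt1 le_s.
have [f good] := exists_coloring_avoiding s_gt1 (ltnW k_gt1) unifB le_dep le_s.
exact: presequencing_of_coloring l_gt0 good.
Qed.
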